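(* Let $n\ge1$ have binary expansion $n=\sum_{j=1}^{\ell}2^{m_j}$ with $\ell\ge1$ and integers $m_1>m_2>\cdots>m_\ell\ge0$. Then $$c_n=\sum_{j=2}^{\ell}2^{m_j}\bigl(m_1-m_j-2(j-2)\bigr).$$
   Context: Bifurcating trees: rooted trees in which every internal node has exactly two children; $\mathcal{T}_n$ is the set of isomorphism classes of bifurcating trees with $n$ leaves. For a node $w$, $\kappa_T(w)$ is its number of descendant leaves. The Colless index is $\mathcal{C}(T)=\sum_{v}|\kappa_T(v_1)-\kappa_T(v_2)|$, summed over internal nodes $v$ with children $v_1,v_2$; $c_n=\min\{\mathcal{C}(T):T\in\mathcal{T}_n\}$. *)

From mathcomp Require Import all_boot all_order all_algebra.
Import Order.TTheory GRing.Theory Num.Theory.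
Set Implicit Arguments. Unset Strict Implicit. Unset Printing Implicit Defensive.

(* Isomorphism classes are irrelevant for the minimum Colless index,
   since the Colless index is an isomorphism invariant (and the order of the
   two children is irrelevant in |k(v1) - k(v2)|). *)
Inductive btree : Type :=
| Leaf : btree
| Node : btree -> btree -> btree.

Fixpoint leaves (t : btree) : nat :=
  match t with
  | Leaf => 1
  | Node l r => leaves l + leaves r
  end.

Definition absdiff (a b : nat) : nat := (a - b) + (b - a).

Fixpoint colless (t : btree) : nat :=
  match t with
  | Leaf => 0
  | Node l r => absdiff (leaves l) (leaves r) + colless l + colless r
  end.

(* The value c is taken in int so that c_n can be compared directly with
   integer-valued formulas (no truncation). *)
Definition is_min_colless (n : nat) (c : int) : Prop :=
  (exists t, leaves t = n /\ Posz (colless t) = c) /\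
  (forall t, leaves t = n -> (c <= Posz (colless t))%R).

From mathcomp Require Import all_boot all_order all_algebra.
From mathcomp Require Import zify.
Import Order.TTheory GRing.Theory Num.Theory.

Set Implicit Arguments.
Unset Strict Implicit.
Unset Printing Implicit Defensive.

(* The minimum Colless index c_n is attained by the maximally balanced tree
   bal n, whose root splits the n leaves into ceil(n/2) and floor(n/2).
   Writing cmin n for its Colless index, the proof has three parts.
   1. Recurrence: cmin (2x) = 2 cmin x and cmin (2x+1) = cmin (x+1) + cmin x + 1
      for x >= 1.
   2. Minimality: cmin (a + b) <= cmin a + cmin b + |a - b|, by strong
      induction on a + b and the parities of a and b (a part with a single
      leaf is handled by cmin (n+1) <= cmin n + n - 1); by structural
      induction on trees, cmin (leaves t) <= colless t for every tree t.
   3. Closed form: with popsum r the total number of 1-bits of 0, ..., r-1,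
      cmin (2^m + r) = m r - 2 popsum r whenever r <= 2^m.  Since
      popsum (2^x + k) = popsum (2^x) + popsum k + k for k <= 2^x and
      2 popsum (2^x) = x 2^x, an induction along the strictly decreasing
      exponent list turns this into the sum of the statement. *)

Section HalvingRecursion.
Variables (A : Type) (base : nat -> A) (step : nat -> A -> A -> A).

Fixpoint halfrec_fuel (k n : nat) : A :=
  if k is k'.+1 then
    if n <= 1 then base n
    else step n (halfrec_fuel k' (uphalf n)) (halfrec_fuel k' n./2)
  else base n.

Definition halfrec (n : nat) : A := halfrec_fuel n n.

Lemma halfrec_fuel_irr k1 k2 n :
  n <= k1 -> n <= k2 -> halfrec_fuel k1 n = halfrec_fuel k2 n.
Proof.
elim: k1 k2 n => [|k1 IH] [|k2] n //= le1 le2.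
- by have -> : n = 0 by lia.
- by have -> : n = 0 by lia.
- by case: ifP => // /negbT gt1; congr step; apply: IH; lia.
Qed.

Lemma halfrec_small n : n <= 1 -> halfrec n = base n.
Proof. by case: n => [|[|]]. Qed.

Lemma halfrec_step n :
  1 < n -> halfrec n = step n (halfrec (uphalf n)) (halfrec n./2).
Proof.
case: n => [|n] // lt1n.
have unfold1 : halfrec n.+1 = if n.+1 <= 1 then base n.+1 else
    step n.+1 (halfrec_fuel n (uphalf n.+1)) (halfrec_fuel n n.+1./2) by [].
rewrite unfold1 ifF; last lia.
by congr step; apply: halfrec_fuel_irr; lia.
Qed.

End HalvingRecursion.

Definition popcount : nat -> nat := halfrec id (fun n _ h => odd n + h).

Lemma popcount_bit (b : bool) n : popcount (b + 2 * n) = b + popcount n.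
Proof.
rewrite /popcount; case: (leqP (b + 2 * n) 1) => [small|big].
- have -> : n = 0 by lia.
  by rewrite muln0 addn0 !halfrec_small //; case: b {small}.
- rewrite halfrec_step //=.
  have -> : odd (b + 2 * n) = b by lia.
  by have -> : (b + 2 * n)./2 = n by lia.
Qed.

Lemma popcount_double n : popcount (2 * n) = popcount n.
Proof. exact: (popcount_bit false). Qed.

Lemma popcount_pow2_add x k : k < 2 ^ x -> popcount (2 ^ x + k) = (popcount k).+1.
Proof.
elim: x k => [|x IH] k; rewrite ?expnS => ltk.
- by have -> : k = 0 by lia.
- have -> : 2 * 2 ^ x + k = odd k + 2 * (2 ^ x + k./2) by lia.
  rewrite popcount_bit IH; last lia.
  rewrite [in RHS](_ : k = odd k + 2 * k./2); last lia.
  by rewrite popcount_bit addnS.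
Qed.

Definition popsum (r : nat) : nat := \sum_(0 <= k < r) popcount k.

Lemma popsum0 : popsum 0 = 0.
Proof. by rewrite /popsum big_geq. Qed.

Lemma popsumS r : popsum r.+1 = popsum r + popcount r.
Proof. by rewrite /popsum big_nat_recr. Qed.

(* 2k and 2k+1 both have the bits of k, and 2k+1 has one more. *)
Lemma popsum_double r : popsum (2 * r) = 2 * popsum r + r.
Proof.
elim: r => [|r IH]; first by rewrite muln0 popsum0.
have -> : 2 * r.+1 = (2 * r).+2 by lia.
rewrite !popsumS IH popcount_double -[(2 * r).+1]/(true + 2 * r) popcount_bit.
lia.
Qed.

Lemma popsum_pow2 x : 2 * popsum (2 ^ x) = x * 2 ^ x.
Proof.
elim: x => [|x IH]; first by rewrite expn0 popsumS popsum0.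
rewrite expnS popsum_double; lia.
Qed.

(* The numbers 2^x + j, j < k, have the bits of j plus the leading bit. *)
Lemma popsum_pow2_add x k :
  k <= 2 ^ x -> popsum (2 ^ x + k) = popsum (2 ^ x) + popsum k + k.
Proof.
elim: k => [|k IH] lek; first by rewrite !addn0 popsum0 addn0.
rewrite addnS !popsumS IH ?popcount_pow2_add; lia.
Qed.

Definition bal : nat -> btree := halfrec (fun=> Leaf) (fun _ l r => Node l r).

Definition cmin (n : nat) : nat := colless (bal n).

Lemma bal_node n : 1 < n -> bal n = Node (bal (uphalf n)) (bal n./2).
Proof. exact: halfrec_step. Qed.

Lemma leaves_bal n : 0 < n -> leaves (bal n) = n.
Proof.
have [N ltnN] := ubnP n; elim: N n ltnN => // N IH n ltnN n_gt0.
case: (leqP n 1) => [le1|gt1]; first by rewrite /bal halfrec_small //=; lia.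
by rewrite bal_node //= !IH; lia.
Qed.

Lemma cmin1 : cmin 1 = 0. Proof. by []. Qed.

(* The root of bal n contributes |ceil(n/2) - floor(n/2)| = odd n. *)
Lemma cmin_node n : 1 < n -> cmin n = odd n + cmin (uphalf n) + cmin n./2.
Proof.
move=> gt1; rewrite /cmin bal_node //= !leaves_bal /absdiff; lia.
Qed.

Lemma cmin_double x : cmin (2 * x) = 2 * cmin x.
Proof.
case: (posnP x) => [->|x_gt0] //.
rewrite cmin_node; last lia.
have -> : odd (2 * x) = false by lia.
have -> : uphalf (2 * x) = x by lia.
have -> : (2 * x)./2 = x by lia.
lia.
Qed.

Lemma parity_split n : exists y, n = 2 * y \/ n = (2 * y).+1.
Proof. by exists n./2; lia. Qed.

Lemma cmin_odd x : 0 < x -> cmin (2 * x).+1 = cmin x.+1 + cmin x + 1.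
Proof.
move=> x_gt0; rewrite cmin_node; last lia.
have -> : odd (2 * x).+1 = true by lia.
have -> : uphalf (2 * x).+1 = x.+1 by lia.
have -> : (2 * x).+1./2 = x by lia.
lia.
Qed.

Lemma cmin_succ_le n : 0 < n -> cmin n.+1 <= cmin n + n.-1.
Proof.
have [N] := ubnP n; elim: N n => // N IH n ltnN n_gt0.
have [y [en|en]] := parity_split n; subst n.
- rewrite cmin_odd ?cmin_double; last lia.
  by have := IH y; lia.
- case: (posnP y) => [->|y_gt0]; first by rewrite (cmin_double 1).
  have -> : (2 * y).+2 = 2 * y.+1 by lia.
  rewrite cmin_double cmin_odd //.
  by have := IH y; lia.
Qed.

Lemma cmin_subadd_small a b :
  a <= 1 -> cmin (a + b) <= cmin a + cmin b + absdiff a b.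
Proof.
case: a => [|[|]] // _; first by rewrite add0n /absdiff; lia.
case: (posnP b) => [->|b_gt0] //.
by have := cmin_succ_le b_gt0; rewrite add1n cmin1 /absdiff; lia.
Qed.

Lemma cmin_subadd a b : cmin (a + b) <= cmin a + cmin b + absdiff a b.
Proof.
have [N] := ubnP (a + b); elim: N a b => // N IH a b ltN.
case: (leqP a 1) => [le_a1|gt_a1]; first exact: cmin_subadd_small.
case: (leqP b 1) => [le_b1|gt_b1].
  by have := cmin_subadd_small a le_b1; rewrite [b + a]addnC /absdiff; lia.
have [x [ea|ea]] := parity_split a; have [y [eb|eb]] := parity_split b;
  subst a b.
- rewrite -mulnDr !cmin_double.
  by have := IH x y; rewrite /absdiff; lia.
- rewrite addnS -mulnDr !cmin_odd ?cmin_double; try lia.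
  by move: (IH x y.+1) (IH x y); rewrite addnS /absdiff; lia.
- rewrite addSn -mulnDr !cmin_odd ?cmin_double; try lia.
  by move: (IH x.+1 y) (IH x y); rewrite addSn /absdiff; lia.
- have -> : (2 * x).+1 + (2 * y).+1 = 2 * (x + y).+1 by lia.
  rewrite cmin_double !cmin_odd; try lia.
  by move: (IH x.+1 y) (IH x y.+1); rewrite addSn addnS /absdiff; lia.
Qed.

Lemma cmin_le_colless t : cmin (leaves t) <= colless t.
Proof.
elim: t => //= l IHl r IHr.
by have := cmin_subadd (leaves l) (leaves r); lia.
Qed.

Lemma cmin_pow2_add m r : r <= 2 ^ m -> cmin (2 ^ m + r) + 2 * popsum r = m * r.
Proof.
elim: m r => [|m IH] r.
  by case: r => [|[|r]] // _; rewrite ?popsumS popsum0.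
rewrite expnS => le_r; have pos := expn_gt0 2 m.
have [y [er|er]] := parity_split r; subst r.
- rewrite -mulnDr cmin_double popsum_double.
  by have := IH y; lia.
- rewrite addnS -mulnDr cmin_odd ?popsumS ?popsum_double ?popcount_double; last lia.
  by move: (IH y) (IH y.+1); rewrite addnS popsumS; nia.
Qed.

Definition pow2sum (s : seq nat) : nat := \sum_(y <- s) 2 ^ y.

Lemma pow2sum_lt x s : sorted gtn (x :: s) -> pow2sum s < 2 ^ x.
Proof.
elim: s x => [|y s IH] x /=; first by rewrite /pow2sum big_nil expn_gt0.
move=> /andP [lt_yx sorted_s]; rewrite /pow2sum big_cons -/(pow2sum s).
have := IH y sorted_s; have : 2 ^ y.+1 <= 2 ^ x by rewrite leq_exp2l.
by rewrite expnS; lia.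
Qed.

Lemma weighted_pow2sum (s : seq nat) (m : int) : sorted gtn s ->
  (\sum_(0 <= k < size s)
     ((2 ^ nth 0%N s k)%:Z * (m - (nth 0%N s k)%:Z - 2 * k%:Z)))%R
  = (m * (pow2sum s)%:Z - 2 * (popsum (pow2sum s))%:Z)%R.
Proof.
elim: s m => [|x s IH] m sorted_xs.
  by rewrite big_geq // /pow2sum big_nil popsum0 !mulr0 subr0.
rewrite /= big_nat_recl //= (eq_bigr (fun k =>
    (2 ^ nth 0%N s k)%:Z * ((m - 2) - (nth 0%N s k)%:Z - 2 * k%:Z))%R); last first.
  by move=> k _; lia.
rewrite IH; last exact: path_sorted sorted_xs.
rewrite /pow2sum big_cons -/(pow2sum s).
have lt_s := pow2sum_lt sorted_xs.
rewrite popsum_pow2_add; last lia.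
have := popsum_pow2 x.
rewrite !PoszD; lia.
Qed.

Lemma cmin_binary m t : sorted gtn (m :: t) ->
  (\sum_(1 <= i < size (m :: t))
     ((2 ^ nth 0%N (m :: t) i)%:Z *
       ((nth 0%N (m :: t) 0)%:Z - (nth 0%N (m :: t) i)%:Z - 2 * (i%:Z - 1))))%R
  = Posz (cmin (pow2sum (m :: t))).
Proof.
move=> sorted_mt; have lt_t := pow2sum_lt sorted_mt.
rewrite /= big_add1 /= (eq_bigr (fun k =>
    (2 ^ nth 0%N t k)%:Z * (m%:Z - (nth 0%N t k)%:Z - 2 * k%:Z))%R); last first.
  by move=> k _; lia.
rewrite weighted_pow2sum; last exact: path_sorted sorted_mt.
rewrite /pow2sum big_cons -/(pow2sum t).
by have := cmin_pow2_add (ltnW lt_t); lia.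
Qed.

Theorem theorem2 (n : nat) (s : seq nat) :
  (1 <= n)%N -> (0 < size s)%N -> sorted gtn s ->
  n = (\sum_(m <- s) 2 ^ m)%N ->
  is_min_colless n
    ((\sum_(1 <= i < size s)
        ((2 ^ nth 0%N s i)%:Z *
          ((nth 0%N s 0)%:Z - (nth 0%N s i)%:Z - 2 * (i%:Z - 1))))%R).
Proof.
case: s => [|m t] // n_gt0 _ sorted_mt def_n.
rewrite cmin_binary //; have -> : pow2sum (m :: t) = n by rewrite def_n.
split.
- by exists (bal n); rewrite leaves_bal.
- by move=> tree <-; rewrite lez_nat; apply: cmin_le_colless.
Qed.
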